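(* Let $t\ge1$, $F=\mathbb{F}_{2^t}$, $A\subseteq F$ with $|A|=n\le 2^t$, and let $k$ satisfy $r=n-k\ge 2$. Let $\alpha^*\in A$, choose $z_1,\dots,z_t\in F$ such that $\beta_i:=\alpha^*-z_i$ ($i=1,\dots,t$) form a basis of $F$ over $\mathbb{F}_2$, and set $g_i(x)=\beta_i(x-z_i)$. Then the check polynomials $g_1,\dots,g_t$ yield a linear repair scheme over $\mathbb{F}_2$ for the codeword symbol $f(\alpha^* )$ of the Reed-Solomon code $\mathrm{RS}(A,k)$ with repair bandwidth at most $(n-1)(t-1)$ bits. Moreover, when $n=|F|=2^t$ and $r=2$, this repair bandwidth is optimal, i.e. no linear repair scheme over $\mathbb{F}_2$ for a single erased symbol has bandwidth smaller than $(n-1)(t-1)$ bits.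
   Context: $\mathrm{RS}(A,k)=\{(f(\alpha))_{\alpha\in A} : f\in F[x],\ \deg f<k\}$, with $f(\alpha)$ stored at node $\alpha$. Every polynomial $g\in F[x]$ of degree at most $r-1$ gives a dual codeword (a check), i.e. $\sum_{\alpha\in A}\lambda_\alpha g(\alpha)f(\alpha)=0$ for fixed nonzero multipliers $\lambda_\alpha$. Given checks $g_1,\dots,g_t$ of degree at most $r-1$ with $\mathrm{rank}_{\mathbb{F}_2}\{g_i(\alpha^* )\}_i=t$, one obtains a linear repair scheme over $\mathbb{F}_2$: applying the trace $\mathrm{Tr}_{F/\mathbb{F}_2}$ to the check equations, the replacement node recovers the $t$ independent traces $\mathrm{Tr}(\lambda_{\alpha^*}g_i(\alpha^* )f(\alpha^* ))$ by downloading from node $\alpha\ne\alpha^*$ exactly $b_\alpha=\mathrm{rank}_{\mathbb{F}_2}\{g_1(\alpha),\dots,g_t(\alpha)\}$ sub-symbols; the repair bandwidth is $\sum_{\alpha\ne\alpha^*}b_\alpha$ sub-symbols. In general a linear repair scheme over $\mathbb{F}_2$ is one where each node sends $\mathbb{F}_2$-linear functions of its symbol and $f(\alpha^* )$ is recovered $\mathbb{F}_2$-linearly; its bandwidth is the total number of bits downloaded. *)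

From HB Require Import structures.
From mathcomp Require Import all_boot all_order all_algebra all_field.
Set Implicit Arguments. Unset Strict Implicit. Unset Printing Implicit Defensive.
Import GRing.Theory.
Local Open Scope ring_scope.

(* F_2-linear independence of the subfamily (v i)_{i in S} of elements of F:
   no nonempty subfamily of it sums to 0 (scalars over F_2 are 0/1). *)
Definition F2indep (F : finFieldType) (m : nat) (v : 'I_m -> F) (S : {set 'I_m}) : bool :=
  [forall T : {set 'I_m}, (T \subset S) ==> (\sum_(i in T) v i == 0) ==> (T == set0)].

Definition F2rank (F : finFieldType) (m : nat) (v : 'I_m -> F) : nat :=
  \max_(S : {set 'I_m} | F2indep v S) #|S|.

Definition F2basis (F : finFieldType) (m : nat) (v : 'I_m -> F) : Prop :=
  F2indep v setT /\ forall x : F, exists S : {set 'I_m}, x = \sum_(i in S) v i.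

(* A linear repair scheme over F_2 for node astar of RS(A,k) = {(f(a))_{a in A} : deg f < k}.
   Node a (a in A, a <> astar) sends rs_b a bits, the j-th being the F_2-linear
   (= additive) function rs_q a j of its symbol f(a); the replacement node recovers
   f(astar) by the F_2-linear (= additive) map rs_rec from the downloaded bits.
   Bits are elements of 'F_2; downloads of nodes outside A \ {astar} are forced to 0. *)
Unset Implicit Arguments.
Record lin_repair_scheme (F : finFieldType) (A : {set F}) (k : nat) (astar : F) :=
  LinRepair {
    rs_b : F -> nat;
    rs_q : forall a : F, 'I_(rs_b a) -> F -> 'F_2;
    rs_rec : (forall a : F, 'I_(rs_b a) -> 'F_2) -> F;
    rs_q_lin : forall a j x y, rs_q a j (x + y) = rs_q a j x + rs_q a j y;
    rs_rec_lin : forall u v : (forall a : F, 'I_(rs_b a) -> 'F_2),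
        rs_rec (fun a j => u a j + v a j) = rs_rec u + rs_rec v;
    rs_correct : forall f : {poly F}, (size f <= k)%N ->
        rs_rec (fun a j => if (a \in A) && (a != astar) then rs_q a j f.[a] else 0)
        = f.[astar]
  }.

Set Implicit Arguments.
Arguments rs_b {F A k astar}.
Arguments lin_repair_scheme {F}.

Definition rs_bandwidth (F : finFieldType) (A : {set F}) (k : nat) (astar : F)
  (S : lin_repair_scheme A k astar) : nat :=
  (\sum_(a in A | a != astar) rs_b S a)%N.

From HB Require Import structures.
From mathcomp Require Import all_boot all_order all_algebra all_field.
From mathcomp.algebra_tactics Require Import ring.
From mathcomp Require Import zify.
From Stdlib Require Import FunctionalExtensionality.
Set Implicit Arguments. Unset Strict Implicit. Unset Printing Implicit Defensive.
Import GRing.Theory.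
Local Open Scope ring_scope.

(* Upper bound: g_i(x) = β_i (x - α^* ) + β_i^2, so the values g_i(α^* ) = β_i^2 form an
   F_2-basis (the Frobenius map is additive and bijective), while for α <> α^* the indices
   i occurring in the β-expansion of α - α^* give
   Σ_i g_i(α) = (α - α^* )^2 + (α - α^* )^2 = 0, so node α may omit one of its t bits. Any nonzero F_2-linear functional F -> F_2 can
   replace the trace; we use a coordinate in the basis β.
   Lower bound (A = F, k = n - 2): let K_α be the common kernel of the queries sent to
   node α, so that |K_α| >= 2^(t - b_α). The sets (α - α_0) K_α pairwise meet only in 0:
   a common nonzero element yields a polynomial f of degree n - 3 vanishing outside
   three points whose values at all α <> α_0 lie in K_α (the dual check
   Σ_{x in F} (x - α_0) f(x) = 0 fixes the third value) but with f(α_0) <> 0, which the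
   repair cannot recover. Counting nonzero elements gives Σ_α (|K_α| - 1) <= n - 1,
   and |K_α| - 1 >= t - b_α. *)

Section AdditiveFun.
Variables (U V : zmodType) (f : U -> V).
Hypothesis fD : {morph f : x y / x + y}.

Lemma additive0 : f 0 = 0.
Proof. by apply: (addrI (f 0)); rewrite -fD !addr0. Qed.

Lemma additiveN x : f (- x) = - f x.
Proof. by apply/eqP; rewrite -subr_eq0 opprK -fD addNr additive0. Qed.

Lemma additiveB x y : f (x - y) = f x - f y.
Proof. by rewrite fD additiveN. Qed.

Lemma additive_sum (I : finType) (P : pred I) (G : I -> U) :
  f (\sum_(i | P i) G i) = \sum_(i | P i) f (G i).
Proof. by elim/big_rec2: _ => [|i y1 y2 _ <-]; rewrite ?additive0 ?fD. Qed.

End AdditiveFun.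

Lemma card_le_mul_ker (U V : finZmodType) (f : U -> V) :
  {morph f : x y / x + y} -> (#|U| <= #|V| * #|[set x | f x == 0%R]|)%N.
Proof.
move=> fD; pose rep v := odflt 0 [pick x | f x == v].
have f_rep x : f (rep (f x)) = f x.
  by rewrite /rep; case: pickP => [y /eqP // | /(_ x)]; rewrite eqxx.
pose decomp x := (f x, x - rep (f x)).
have decomp_inj : injective decomp.
  move=> x y [fxy]; rewrite fxy => /(congr1 (fun u => u + rep (f y))).
  by rewrite !subrK.
rewrite -cardsT -(card_imset _ decomp_inj) -[#|V|]cardsT -cardsX subset_leq_card //.
apply/subsetP => _ /imsetP[x _ ->]; rewrite !inE /=.
by rewrite (additiveB fD) f_rep subrr.
Qed.

Lemma card_rV_F2 (m : nat) : #|{: 'rV['F_2]_m}| = (2 ^ m)%N.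
Proof. by rewrite card_mx card_Fp // mul1n. Qed.

Lemma leq_add_of_exp2 (t b m : nat) :
  (2 ^ t <= 2 ^ b * m.+1)%N -> (t <= b + m)%N.
Proof.
move=> le_t; rewrite -(@leq_exp2l 2) // expnD.
apply: leq_trans le_t _; by rewrite leq_mul2l ltn_expl // orbT.
Qed.

Lemma sum_nat_const_setD1 (T : finType) (A : {set T}) (x : T) (c : nat) :
  x \in A -> (\sum_(a in A | a != x) c = (#|A| - 1) * c)%N.
Proof.
move=> xA; rewrite (eq_bigl (mem (A :\ x))) ?sum_nat_const.
  by rewrite (cardsD1 x A) xA add1n subn1.
by move=> a; rewrite !inE andbC.
Qed.

Section Char2.
Variables (F : fieldType) (h2 : 2 \in [pchar F]).

Lemma sqr_sum (I : finType) (P : pred I) (G : I -> F) :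
  (\sum_(i | P i) G i) ^+ 2 = \sum_(i | P i) G i ^+ 2.
Proof. exact: (rmorph_sum (pFrobenius_aut h2)). Qed.

Lemma sqr_inj : injective (fun x : F => x ^+ 2).
Proof. exact: (fmorph_inj (pFrobenius_aut h2)). Qed.

Lemma sum_symdiff (m : nat) (v : 'I_m -> F) (S S' : {set 'I_m}) :
  \sum_(i in S) v i + \sum_(i in S') v i =
  \sum_(i in (S :\: S') :|: (S' :\: S)) v i.
Proof.
rewrite (big_setID S') [X in _ + X](big_setID S) [RHS](big_setID S).
have -> : ((S :\: S') :|: (S' :\: S)) :&: S = S :\: S'.
  by apply/setP=> i; rewrite !inE; case: (i \in S); case: (i \in S').
have -> : ((S :\: S') :|: (S' :\: S)) :\: S = S' :\: S.
  by apply/setP=> i; rewrite !inE; case: (i \in S); case: (i \in S').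
by rewrite setIC addrACA addrr_pchar2 // add0r.
Qed.

End Char2.

Section F2Coordinates.
Variables (F : finFieldType) (h2 : 2 \in [pchar F]).
Variables (m : nat) (be : 'I_m -> F).
Hypothesis hbe : F2basis be.

Lemma F2basis_sum_inj : injective (fun S : {set 'I_m} => \sum_(i in S) be i).
Proof.
move=> S S' /= eqSS'.
have /eqP symdiff0 : ((S :\: S') :|: (S' :\: S)) == set0.
  move/forallP: hbe.1 => /(_ ((S :\: S') :|: (S' :\: S))); rewrite subsetT /= => /implyP.
  by apply; rewrite -sum_symdiff // eqSS' addrr_pchar2.
apply/setP => i; have := congr1 (fun X : {set 'I_m} => i \in X) symdiff0.
by rewrite !inE /=; case: (i \in S); case: (i \in S').
Qed.

Definition coord_set (x : F) : {set 'I_m} :=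
  odflt set0 [pick S : {set 'I_m} | x == \sum_(i in S) be i].

Lemma coord_setK x : \sum_(i in coord_set x) be i = x.
Proof.
rewrite /coord_set; case: pickP => [S /eqP -> // | noS].
by have [S eqx] := hbe.2 x; move: (noS S); rewrite eqx eqxx.
Qed.

Lemma coord_setD x y :
  coord_set (x + y) = (coord_set x :\: coord_set y) :|: (coord_set y :\: coord_set x).
Proof. by apply: F2basis_sum_inj; rewrite /= -sum_symdiff // !coord_setK. Qed.

Definition coord (d : 'I_m) (x : F) : 'F_2 := (d \in coord_set x)%:R.

Lemma coordD d : {morph coord d : x y / x + y}.
Proof.
move=> x y; rewrite /coord coord_setD !inE.
case: (d \in coord_set x); case: (d \in coord_set y); rewrite ?addr0 ?add0r //=.
by rewrite addrr_pchar2 // pchar_Fp.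
Qed.

Lemma coord_basis d : coord d (be d) = 1.
Proof.
rewrite /coord.
have -> : coord_set (be d) = [set d] by apply: F2basis_sum_inj; rewrite /= big_set1 coord_setK.
by rewrite inE eqxx.
Qed.

Lemma F2basis_sqr : F2basis (fun i => be i ^+ 2).
Proof.
split.
  apply/forallP => T; apply/implyP => _; apply/implyP => /eqP sum0.
  move/forallP: hbe.1 => /(_ T); rewrite subsetT /= => /implyP; apply; apply/eqP.
  by apply: (sqr_inj h2); rewrite /= sqr_sum // sum0 expr0n.
move=> x; have [r ->] : exists r, x = r ^+ 2.
  by have /codomP[r ->] := inj_card_onto (sqr_inj h2) (leqnn _) x; exists r.
by exists (coord_set r); rewrite -sqr_sum // coord_setK.
Qed.

End F2Coordinates.

Lemma eq_F2indep (F : finFieldType) (m : nat) (v w : 'I_m -> F) (S : {set 'I_m}) :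
  v =1 w -> F2indep v S = F2indep w S.
Proof. by move=> eq_vw; apply: eq_forallb => T; rewrite (eq_bigr _ (fun i _ => eq_vw i)). Qed.

Section F2Rank.
Variables (F : finFieldType) (m : nat) (v : 'I_m -> F).

Lemma F2rank_le_dim : (F2rank v <= m)%N.
Proof. by apply/bigmax_leqP => S _; rewrite -[X in (_ <= X)%N]card_ord max_card. Qed.

Lemma F2rank_full : F2indep v setT -> F2rank v = m.
Proof.
move=> indepT; apply/eqP; rewrite eqn_leq F2rank_le_dim /=.
by have := @leq_bigmax_cond _ _ (fun S : {set 'I_m} => #|S|) _ indepT; rewrite cardsT card_ord.
Qed.

Lemma F2rank_le_pred (T : {set 'I_m}) :
  T != set0 -> \sum_(i in T) v i = 0 -> (F2rank v <= m.-1)%N.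
Proof.
move=> T_neq0 sumT0; apply/bigmax_leqP => S indepS.
have : S \proper setT.
  rewrite properT; apply: contra_neq T_neq0 => S_T.
  by move/forallP: indepS => /(_ T); rewrite S_T subsetT sumT0 eqxx => /eqP.
by move/proper_card; rewrite cardsT card_ord => ltSm; rewrite -ltnS (ltn_predK ltSm).
Qed.

End F2Rank.

Section DualCode.
Variables (F : finFieldType) (A : {set F}).

Definition dual_coef (a : F) : F := (\prod_(b in A :\ a) (a - b))^-1.

Definition node_poly (a : F) : {poly F} := \prod_(b in A :\ a) ('X - b%:P).

Lemma dual_coef_neq0 a : dual_coef a != 0.
Proof.
rewrite invr_eq0; apply/prodf_neq0 => b; rewrite !inE subr_eq0 eq_sym.
by case/andP.
Qed.

Lemma size_node_poly a : a \in A -> size (node_poly a) = #|A|.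
Proof.
by move=> aA; rewrite /node_poly -big_enum size_prod_XsubC -cardE (cardsD1 a A) aA.
Qed.

Lemma horner_node_poly a c : (node_poly a).[c] = \prod_(b in A :\ a) (c - b).
Proof. by rewrite horner_prod; apply: eq_bigr => b _; rewrite hornerXsubC. Qed.

Lemma lagrange_interpolation (h : {poly F}) :
  (size h <= #|A|)%N -> h = \sum_(a in A) (dual_coef a * h.[a]) *: node_poly a.
Proof.
move=> size_h; set L := \sum_(a in A) _.
have L_A c : c \in A -> L.[c] = h.[c].
  move=> cA; rewrite horner_sum (bigD1 c) //= big1 ?addr0.
    rewrite hornerZ horner_node_poly /dual_coef mulrAC mulVf ?mul1r //.
    by rewrite -invr_eq0 -/(dual_coef c) dual_coef_neq0.
  move=> a /andP[_ a_c]; rewrite hornerZ horner_node_poly (bigD1 c) /=.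
    by rewrite subrr mul0r mulr0.
  by rewrite !inE eq_sym a_c.
have size_L : (size L <= #|A|)%N.
  apply: leq_trans (size_sum _ _ _) _; apply/bigmax_leqP => a aA.
  by rewrite (leq_trans (size_scale_leq _ _)) // size_node_poly.
apply/eqP; rewrite -subr_eq0; apply/eqP.
apply: (@roots_geq_poly_eq0 _ _ (enum A)); last 1 first.
- by rewrite -cardE (leq_trans (size_polyD _ _)) // size_polyN geq_max size_h.
- by apply/allP => c; rewrite mem_enum => cA; rewrite /root hornerD hornerN L_A ?subrr.
- exact: enum_uniq.
Qed.

Lemma dual_check (h : {poly F}) :
  (size h <= #|A|.-1)%N -> \sum_(a in A) dual_coef a * h.[a] = 0.
Proof.
move=> size_h; have := congr1 (fun p : {poly F} => p`_(#|A|.-1))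
  (lagrange_interpolation (leq_trans size_h (leq_pred _))).
rewrite /= nth_default // coef_sum => coef0; rewrite [RHS]coef0; apply: eq_bigr => a aA.
have /monicP lead1 : node_poly a \is monic by apply: monic_prod_XsubC.
by rewrite coefZ -(size_node_poly aA) -lead_coefE lead1 mulr1.
Qed.

End DualCode.

Lemma dual_coef_setT (F : finFieldType) (a : F) :
  dual_coef [set: F] a = dual_coef [set: F] 0.
Proof.
congr (_^-1); rewrite (reindex_inj (addrI a)) /=; apply: eq_big => [c | c _].
  by rewrite !inE -[X in _ != X]addr0 (inj_eq (addrI a)).
by rewrite opprD addrA subrr.
Qed.

Lemma sum_horner_setT (F : finFieldType) (h : {poly F}) :
  (size h <= #|F|.-1)%N -> \sum_(a : F) h.[a] = 0.
Proof.
move=> size_h; have := dual_check (A := [set: F]) (h := h); rewrite cardsT => /(_ size_h).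
under eq_bigr do rewrite dual_coef_setT.
rewrite -mulr_sumr => /eqP; rewrite mulf_eq0 (negbTE (dual_coef_neq0 _ _)) /=.
by rewrite (eq_bigl xpredT) // => [/eqP | a]; rewrite ?inE.
Qed.

Lemma codeword_three_points (F : finFieldType) (a0 a1 a2 y1 : F) :
  a1 != a0 -> a2 != a0 -> a1 != a2 -> y1 != 0 ->
  exists f : {poly F},
    [/\ (size f <= #|F| - 2)%N, f.[a0] != 0, f.[a1] = y1,
        (a2 - a0) * f.[a2] = - ((a1 - a0) * y1)
      & forall a, a \notin [set a0; a1; a2] -> f.[a] = 0].
Proof.
move=> a10 a20 a12 y1_neq0; set X := [set a0; a1; a2].
pose P := \prod_(b in ~: X) ('X - b%:P).
have hornerP c : P.[c] = \prod_(b in ~: X) (c - b).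
  by rewrite horner_prod; apply: eq_bigr => b _; rewrite hornerXsubC.
have P_neq0 c : c \in X -> P.[c] != 0.
  move=> cX; rewrite hornerP; apply/prodf_neq0 => b; rewrite inE subr_eq0.
  by apply: contraNneq => <-.
have P_eq0 c : c \notin X -> P.[c] = 0.
  move=> cX; rewrite hornerP (bigD1 c) /=; first by rewrite subrr mul0r.
  by rewrite inE.
have card_X : #|X| = 3%N.
  by rewrite /X setUC cardsU1 cards2 !inE negb_or a20 (eq_sym a2) a12 (eq_sym a0) a10.
have X_a0 : a0 \in X by rewrite !inE eqxx.
have X_a1 : a1 \in X by rewrite !inE eqxx orbT.
have card_F : (3 + #|~: X|)%N = #|F| by rewrite -(cardsC X) card_X.
pose f := (y1 / P.[a1]) *: P.
have size_f : (size f <= #|F| - 2)%N.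
  rewrite (leq_trans (size_scale_leq _ _)) // /P -big_enum size_prod_XsubC -cardE.
  by rewrite -card_F; lia.
have f_a1 : f.[a1] = y1 by rewrite hornerZ divfK ?P_neq0.
have f_out a : a \notin X -> f.[a] = 0 by move=> aX; rewrite hornerZ (P_eq0 a) // mulr0.
exists f; split => //; first by rewrite hornerZ !mulf_neq0 ?invr_eq0 ?P_neq0.
have : \sum_a (('X - a0%:P) * f).[a] = 0.
  apply: sum_horner_setT; rewrite (leq_trans (size_mul_leq _ _)) // size_XsubC.
  by move: size_f; rewrite -card_F; lia.
rewrite (bigD1 a1) // (bigD1 a2) /=; last by rewrite eq_sym.
rewrite big1 => [|a /andP[a_a1 a_a2]].
  by rewrite !hornerM !hornerXsubC f_a1 addr0 addrC => /eqP; rewrite addr_eq0 => /eqP.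
rewrite hornerM hornerXsubC; have [-> | a_a0] := eqVneq a a0; first by rewrite subrr mul0r.
by rewrite f_out ?mulr0 // !inE (negbTE a_a0) (negbTE a_a1) (negbTE a_a2).
Qed.

Section RepairLowerBound.
Variables (t k : nat) (F : finFieldType) (a0 : F).
Hypotheses (hF : #|F| = (2 ^ t)%N) (hk : #|F| = (k + 2)%N).
Variable S : lin_repair_scheme [set: F] k a0.

Local Notation b := (rs_b S).
Local Notation q := (rs_q _ _ _ _ S).
Local Notation rec := (rs_rec _ _ _ _ S).

Definition query_vec a (y : F) : 'rV['F_2]_(b a) := \row_j q a j y.

Lemma query_vecD a : {morph query_vec a : x y / x + y}.
Proof. by move=> x y; apply/rowP => j; rewrite !mxE rs_q_lin. Qed.

Definition query_ker a : {set F} := [set y | query_vec a y == 0].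

Lemma query_ker0 a : 0 \in query_ker a.
Proof. by rewrite inE (additive0 (query_vecD a)). Qed.

Lemma query_kerN a y : y \in query_ker a -> - y \in query_ker a.
Proof. by rewrite !inE (additiveN (query_vecD a)) oppr_eq0. Qed.

Lemma card_query_ker a : (2 ^ t <= 2 ^ b a * #|query_ker a|)%N.
Proof. by rewrite -hF -(card_rV_F2 (b a)); apply: card_le_mul_ker (query_vecD a). Qed.

Lemma rs_rec0 : rec (fun a j => 0) = 0.
Proof.
apply: (addrI (rec (fun a j => 0))); rewrite addr0 -rs_rec_lin; congr rec.
by do 2 apply: functional_extensionality_dep => ?; rewrite addr0.
Qed.

Lemma query_ker_codeword (f : {poly F}) : (size f <= k)%N ->
  (forall a, a != a0 -> f.[a] \in query_ker a) -> f.[a0] = 0.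
Proof.
move=> size_f f_ker; rewrite -(rs_correct _ _ _ _ S _ size_f) -[RHS]rs_rec0; congr rec.
apply: functional_extensionality_dep => a; apply: functional_extensionality => j.
rewrite in_setT /=; case: ifP => // a_a0.
by move: (f_ker a a_a0); rewrite inE => /eqP/rowP/(_ j); rewrite !mxE.
Qed.

Definition scaled_ker a : {set F} := [set (a - a0) * y | y in query_ker a] :\ 0.

Lemma card_scaled_ker a : a != a0 -> #|query_ker a| = (#|scaled_ker a|).+1.
Proof.
move=> a_a0; rewrite -add1n -(card_imset _ (mulfI (_ : a - a0 != 0))); last by rewrite subr_eq0.
rewrite (cardsD1 0); congr (_ + _)%N; apply/eqP; rewrite eqb1.
by apply/imsetP; exists 0; rewrite ?query_ker0 ?mulr0.
Qed.

Lemma scaled_ker_a0 : scaled_ker a0 = set0.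
Proof.
apply/setP => x; rewrite !inE; apply/andP => -[x_neq0 /imsetP[y _ eq_x]].
by move: x_neq0; rewrite eq_x subrr mul0r eqxx.
Qed.

Lemma scaled_ker_disjoint a1 a2 : a1 != a2 -> [disjoint scaled_ker a1 & scaled_ker a2].
Proof.
move=> a12; apply/pred0P => x /=; apply/negP.
case/andP => /setD1P[x_neq0 /imsetP[y1 y1K x1]] /setD1P[_ /imsetP[y2 y2K x2]].
rewrite x1 in x_neq0 x2; rename x2 into x12.
have [a10 | a10] := eqVneq a1 a0; first by rewrite a10 subrr mul0r eqxx in x_neq0.
have [a20 | a20] := eqVneq a2 a0; first by rewrite x12 a20 subrr mul0r eqxx in x_neq0.
have y1_neq0 : y1 != 0 by apply: contraNneq x_neq0 => ->; rewrite mulr0.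
have [f [size_f f_a0 f_a1 f_a2 f_out]] := codeword_three_points a10 a20 a12 y1_neq0.
have f_a2' : f.[a2] = - y2.
  by apply: (mulfI (_ : a2 - a0 != 0)); rewrite ?subr_eq0 // f_a2 x12 mulrN.
apply/negP: f_a0; apply/negPn/eqP; apply: query_ker_codeword => [|a a_a0].
  by rewrite hk addnK in size_f.
have [-> | a_a1] := eqVneq a a1; first by rewrite f_a1.
have [-> | a_a2] := eqVneq a a2; first by rewrite f_a2' query_kerN.
by rewrite f_out ?query_ker0 // !inE (negbTE a_a0) (negbTE a_a1) (negbTE a_a2).
Qed.

Lemma sum_card_scaled_ker : (\sum_a #|scaled_ker a| <= #|F|.-1)%N.
Proof.
have := partition_disjoint_bigcup addn (fun _ => 1%N) scaled_ker_disjoint.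
rewrite sum1_card (eq_bigr _ (fun a _ => sum1_card _)) => <-.
rewrite -(cardsC1 0) subset_leq_card //; apply/subsetP => x /bigcupP[a _].
by rewrite !inE => /andP[].
Qed.

Lemma rs_bandwidth_lower : ((#|F| - 1) * (t - 1) <= rs_bandwidth S)%N.
Proof.
have node_bound a : a != a0 -> (t <= b a + #|scaled_ker a|)%N.
  by move=> a_a0; apply: leq_add_of_exp2; rewrite -card_scaled_ker ?card_query_ker.
have : ((#|F| - 1) * t <= rs_bandwidth S + #|F|.-1)%N.
  rewrite -cardsT -(sum_nat_const_setD1 _ (in_setT a0)).
  apply: (@leq_trans (\sum_(a in [set: F] | a != a0) (b a + #|scaled_ker a|))).
    by apply: leq_sum => a /andP[_ a_a0]; apply: node_bound.
  rewrite big_split leq_add2l /= cardsT; apply: leq_trans sum_card_scaled_ker.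
  rewrite [X in (_ <= X)%N](bigD1 a0) //= scaled_ker_a0 cards0 add0n.
  by apply: eq_leq; apply: eq_bigl => a; rewrite in_setT.
by rewrite mulnBr muln1 -subn1; lia.
Qed.

End RepairLowerBound.

Section Undrop.
Variables (V : zmodType) (n : nat) (i0 : 'I_n) (T : {set 'I_n}).

Definition undrop (u : 'I_n.-1 -> V) (i : 'I_n) : V :=
  if unlift i0 i is Some j then u j else - \sum_(j | lift i0 j \in T) u j.

Lemma undrop_lift (G : 'I_n -> V) : i0 \in T -> \sum_(i in T) G i = 0 ->
  undrop (fun j => G (lift i0 j)) =1 G.
Proof.
move=> T_i0 sumT0 i; rewrite /undrop; case: unliftP => [j -> // | ->].
by apply/esym/eqP; rewrite -addr_eq0 -(bigD1_ord _ T_i0) sumT0.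
Qed.

Lemma undropD (u v : 'I_n.-1 -> V) (i : 'I_n) :
  undrop (fun j => u j + v j) i = undrop u i + undrop v i.
Proof. by rewrite /undrop; case: unlift => [j // |]; rewrite big_split opprD. Qed.

End Undrop.

Section TraceRepair.
Variables (t : nat) (F : finFieldType).
Hypotheses (ht : (0 < t)%N) (hF : #|F| = (2 ^ t)%N).
Variables (A : {set F}) (k : nat) (astar : F) (z : 'I_t -> F).
Hypotheses (hr : (2 <= #|A| - k)%N) (hastar : astar \in A).

Definition beta i := astar - z i.
Hypothesis hbeta : F2basis beta.

Definition check_poly i : {poly F} := beta i *: ('X - (z i)%:P).

Let h2 : 2 \in [pchar F] := card_finPcharP hF (isT : prime 2).

Lemma size_check_poly i : (size (check_poly i) <= 2)%N.
Proof. by rewrite (leq_trans (size_scale_leq _ _)) // size_XsubC. Qed.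

Lemma horner_check_poly i a : (check_poly i).[a] = beta i * (a - astar) + beta i ^+ 2.
Proof. by rewrite hornerZ hornerXsubC /beta; ring. Qed.

Lemma horner_check_poly_star i : (check_poly i).[astar] = beta i ^+ 2.
Proof. by rewrite horner_check_poly subrr mulr0 add0r. Qed.

Definition beta_supp a := coord_set beta (a - astar).

Lemma sum_check_beta_supp a : \sum_(i in beta_supp a) (check_poly i).[a] = 0.
Proof.
under eq_bigr do rewrite horner_check_poly.
by rewrite big_split /= -mulr_suml -sqr_sum // coord_setK // -expr2 addrr_pchar2.
Qed.

Lemma beta_supp_neq0 a : a != astar -> beta_supp a != set0.
Proof.
move=> a_star; apply: contra_neq a_star => supp0; apply/eqP; rewrite -subr_eq0.
by rewrite -(coord_setK hbeta (a - astar)) -/(beta_supp a) supp0 big_set0.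
Qed.

Lemma F2rank_check_star : F2rank (fun i => (check_poly i).[astar]) = t.
Proof.
apply: F2rank_full; rewrite (eq_F2indep _ horner_check_poly_star).
exact: (F2basis_sqr h2 hbeta).1.
Qed.

Lemma F2rank_check a : a != astar -> (F2rank (fun i => (check_poly i).[a]) <= t.-1)%N.
Proof. by move=> a_star; apply: F2rank_le_pred (beta_supp_neq0 a_star) (sum_check_beta_supp a). Qed.

Definition i_base : 'I_t := Ordinal ht.

Definition proj_bit (x : F) : 'F_2 := coord beta i_base x.

Lemma proj_bitD : {morph proj_bit : x y / x + y}.
Proof. exact: coordD. Qed.

Definition dropped a : 'I_t := odflt i_base [pick i in beta_supp a].

Lemma dropped_in_supp a : a != astar -> dropped a \in beta_supp a.
Proof.
move=> a_star; rewrite /dropped; case: pickP => [i -> // | none].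
by have /set0Pn[i supp_i] := beta_supp_neq0 a_star; move: (none i); rewrite supp_i.
Qed.

Definition repair_query a (j : 'I_t.-1) (y : F) : 'F_2 :=
  proj_bit (dual_coef A a * (check_poly (lift (dropped a) j)).[a] * y).

Lemma repair_queryD a j : {morph repair_query a j : x y / x + y}.
Proof. by move=> x y; rewrite /repair_query mulrDr proj_bitD. Qed.

Definition star_bits (x : F) : 'rV['F_2]_t :=
  \row_i proj_bit (dual_coef A astar * (check_poly i).[astar] * x).

Lemma star_bitsD : {morph star_bits : x y / x + y}.
Proof. by move=> x y; apply/rowP => i; rewrite !mxE mulrDr proj_bitD. Qed.

Lemma star_bits_inj : injective star_bits.
Proof.
suff ker0 x : star_bits x = 0 -> x = 0.
  move=> x y eq_xy; apply/eqP; rewrite -subr_eq0; apply/eqP/ker0.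
  by rewrite (additiveB star_bitsD) eq_xy subrr.
move=> bits0; apply/eqP; apply/negPn/negP => x_neq0.
set c := dual_coef A astar * x.
have c_neq0 : c != 0 by rewrite mulf_neq0 ?dual_coef_neq0.
have [S eqS] := (F2basis_sqr h2 hbeta).2 (beta i_base / c).
have := coord_basis h2 hbeta i_base; rewrite -/(proj_bit _) -(divfK c_neq0 (beta i_base)).
rewrite mulrC eqS mulr_sumr (additive_sum proj_bitD) big1 => [/eqP | i _].
  by rewrite eq_sym oner_eq0.
move/rowP: bits0 => /(_ i); rewrite !mxE horner_check_poly_star => <-.
by rewrite /c mulrAC.
Qed.

Definition star_unbits (v : 'rV['F_2]_t) : F := odflt 0 [pick x | star_bits x == v].

Lemma star_unbitsK : cancel star_unbits star_bits.
Proof.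
move=> v; rewrite /star_unbits; case: pickP => [x /eqP // | none].
have card_bits : (#|{: 'rV['F_2]_t}| <= #|F|)%N by rewrite card_rV_F2 hF.
have /codomP[x eq_v] := inj_card_onto star_bits_inj card_bits v.
by move: (none x); rewrite eq_v eqxx.
Qed.

Lemma star_bitsK : cancel star_bits star_unbits.
Proof. by move=> x; apply: star_bits_inj; rewrite star_unbitsK. Qed.

Lemma star_unbitsD : {morph star_unbits : v w / v + w}.
Proof. by move=> v w; apply: star_bits_inj; rewrite star_bitsD !star_unbitsK. Qed.

Definition received (u : forall a : F, 'I_t.-1 -> 'F_2) : 'rV['F_2]_t :=
  \row_i \sum_(a in A | a != astar) undrop (dropped a) (beta_supp a) (u a) i.

Definition repair_rec u : F := star_unbits (- received u).

Lemma repair_recD u v :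
  repair_rec (fun a j => u a j + v a j) = repair_rec u + repair_rec v.
Proof.
rewrite /repair_rec -star_unbitsD -opprD; congr (star_unbits (- _)).
by apply/rowP => i; rewrite !mxE -big_split; apply: eq_bigr => a _; apply: undropD.
Qed.

Lemma received_queries (f : {poly F}) : (size f <= k)%N ->
  received (fun a j => if (a \in A) && (a != astar) then repair_query a j f.[a] else 0)
  = - star_bits f.[astar].
Proof.
move=> size_f; apply/rowP => i; rewrite !mxE.
pose G a i := proj_bit (dual_coef A a * (check_poly i).[a] * f.[a]).
transitivity (\sum_(a in A | a != astar) G a i).
  apply: eq_bigr => a /andP[aA a_star]; rewrite aA a_star /=.
  apply: (undrop_lift (G := G a)); first exact: dropped_in_supp.
  rewrite -(additive_sum proj_bitD) -mulr_suml -mulr_sumr sum_check_beta_supp.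
  by rewrite mulr0 mul0r (additive0 proj_bitD).
have : \sum_(a in A) dual_coef A a * (check_poly i * f).[a] = 0.
  apply: dual_check; rewrite (leq_trans (size_mul_leq _ _)) //.
  by have := size_check_poly i; lia.
rewrite (bigD1 astar) //= addrC => /eqP; rewrite addr_eq0 => /eqP.
under eq_bigr do rewrite hornerM mulrA.
by rewrite hornerM mulrA /G -(additive_sum proj_bitD) -(additiveN proj_bitD) => ->.
Qed.

Lemma repair_rec_correct (f : {poly F}) : (size f <= k)%N ->
  repair_rec (fun a j => if (a \in A) && (a != astar) then repair_query a j f.[a] else 0)
  = f.[astar].
Proof. by move=> size_f; rewrite /repair_rec received_queries // opprK star_bitsK. Qed.

Definition trace_repair : lin_repair_scheme A k astar :=
  @LinRepair F A k astar (fun _ => t.-1) repair_query repair_rec repair_queryD repair_recD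
    repair_rec_correct.

Lemma rs_bandwidth_trace_repair : rs_bandwidth trace_repair = ((#|A| - 1) * (t - 1))%N.
Proof. by rewrite /rs_bandwidth /trace_repair /= (sum_nat_const_setD1 _ hastar) -subn1. Qed.

Lemma sum_F2rank_check :
  (\sum_(a in A | a != astar) F2rank (fun i => (check_poly i).[a]) <= (#|A| - 1) * (t - 1))%N.
Proof.
rewrite [(t - 1)%N]subn1 -(sum_nat_const_setD1 _ hastar).
by apply: leq_sum => a /andP[_ a_star]; apply: F2rank_check.
Qed.

End TraceRepair.

Unset Implicit Arguments.

Theorem theorem2 (t : nat) (ht : (1 <= t)%N) (F : finFieldType) (hF : #|F| = (2 ^ t)%N)
  (A : {set F}) (k : nat) (hr : (2 <= #|A| - k)%N)
  (astar : F) (hastar : astar \in A) (z : 'I_t -> F)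
  (hbasis : F2basis (fun i => astar - z i)) :
  let g := fun i : 'I_t => (astar - z i) *: ('X - (z i)%:P) in
  (* the g_i are checks: degree at most r - 1 *)
  (forall i, (size (g i) <= #|A| - k)%N) /\
  (* rank_{F_2} {g_i(astar)} = t *)
  F2rank (fun i => (g i).[astar]) = t /\
  (* bandwidth of the trace repair scheme built from the g_i *)
  (\sum_(a in A | a != astar) F2rank (fun i => (g i).[a]) <= (#|A| - 1) * (t - 1))%N /\
  (* hence a linear repair scheme over F_2 for astar with bandwidth <= (n-1)(t-1) *)
  (exists S : lin_repair_scheme A k astar, (rs_bandwidth S <= (#|A| - 1) * (t - 1))%N) /\
  (* optimality when n = 2^t and r = 2 *)
  (#|A| = (2 ^ t)%N -> (#|A| - k = 2)%N ->
     forall a0 : F, a0 \in A -> forall S : lin_repair_scheme A k a0,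
       ((#|A| - 1) * (t - 1) <= rs_bandwidth S)%N).
Proof.
move=> g; rewrite /g; split; [|split; [|split; [|split]]].
- by move=> i; apply: leq_trans (size_check_poly astar z i) hr.
- exact: (F2rank_check_star (z := z) hF hbasis).
- exact: (sum_F2rank_check (z := z) hF hastar hbasis).
- exists (trace_repair (z := z) ht hF hr hastar hbasis).
  by rewrite rs_bandwidth_trace_repair.
- move=> cardA hk a0 _ S.
  have AT : A = [set: F] by apply/eqP; rewrite eqEcard subsetT cardsT cardA hF leqnn.
  subst A; have hk' : #|[set: F]| = (k + 2)%N by lia.
  rewrite cardsT in hk' *; exact: rs_bandwidth_lower hF hk' S.
Qed.
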